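(* Fix $p\in[\tfrac23,1)$. Let $\Phi=\Phi_{\mathsf{Even}}=\sum_{v\in\mathsf{Even}}2^{-N_p(v)}$ and $\mathsf{Window}=\{m\in\mathbb Z_{\ge0}: |m-\mu_p|\le\mu_p^{0.6}\}$. Then, as $d\to\infty$, \[ \frac{\sum_{m\notin\mathsf{Window}}\frac{\Phi^m}{m!}}{\sigma_p\exp(\mu_p)}\xrightarrow{\mathbb P}0 \qquad\text{and}\qquad \frac{\sum_{m\notin\mathsf{Window}}\sum_{S\in\mathsf{Good}^{\mathsf{Even}}_m}2^{-N_p(S)}}{\sigma_p\exp(\mu_p)}\xrightarrow{\mathbb P}0 . \] The same holds with $\mathsf{Even}$ replaced by $\mathsf{Odd}$.
   Context: Setup and notation: - $Q_d=\{0,1\}^d$ is the hypercube graph. - $\mathsf{Even}$ and $\mathsf{Odd}$ are the vertices of even and odd Hamming weight. - $Q_{d,p}$ is obtained by retaining each edge independently with probability $p$. - $N_p(v)$ is the number of neighbors of $v$ in $Q_{d,p}$; for $S$ within one side, $N_p(S)$ is the number of vertices adjacent in $Q_{d,p}$ to some vertex of $S$. - Two same-side vertices are $2$-neighbors if they have a common neighbor in $Q_d$. - $\mathsf{Good}^{\mathsf{Even}}_m$ is the collection of $S\subseteq\mathsf{Even}$ with $|S|=m\le 2^d/d^2$ and no two elements being $2$-neighbors. - $\mu_p=\tfrac12(2-p)^d$ and $\sigma_p^2=\tfrac12(\tfrac{4-3p}{2})^d$. *)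

From HB Require Import structures.
From mathcomp Require Import all_boot all_order all_algebra.
From mathcomp Require Import all_classical all_reals all_analysis.
Set Implicit Arguments. Unset Strict Implicit. Unset Printing Implicit Defensive.
Import Order.TTheory GRing.Theory Num.Theory.
Import numFieldNormedType.Exports.
Local Open Scope ring_scope.

Definition vert (d : nat) := {ffun 'I_d -> bool}.

Definition flip d (u : vert d) (i : 'I_d) : vert d :=
  [ffun j => if j == i then ~~ u j else u j].

Definition hdist d (u v : vert d) : nat := #|[set i | u i != v i]|.

(* An edge of Q_d is encoded as (x, i) with x i = false: the edge {x, flip x i}. *)
Definition edge (d : nat) := (vert d * 'I_d)%type.
Definition cube_edges d : {set edge d} := [set e : edge d | ~~ e.1 e.2].

Definition ekey d (u : vert d) (i : 'I_d) : edge d :=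
  (if u i then flip u i else u, i).

Definition adj d (w : {set edge d}) (u v : vert d) : bool :=
  [exists i, (v == flip u i) && (ekey u i \in w)].

Definition Np d (w : {set edge d}) (v : vert d) : nat := #|[set x | adj w v x]|.
Definition NpS d (w : {set edge d}) (S : {set vert d}) : nat :=
  #|[set x | [exists v in S, adj w v x]]|.

(* side b: b = false is Even, b = true is Odd (parity of Hamming weight) *)
Definition side d (b : bool) : {set vert d} :=
  [set v : vert d | odd #|[set i | v i]| == b].

Definition two_nbr d (u v : vert d) : bool :=
  [exists x : vert d, (hdist u x == 1)%N && (hdist v x == 1)%N].

Definition Good (R : realType) d (b : bool) (m : nat) (S : {set vert d}) : bool :=
  [&& S \subset side d b, #|S| == m,
      (m%:R <= (2 ^+ d : R) / (d%:R ^+ 2)) &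
      [forall u in S, forall v in S, (u != v) ==> ~~ two_nbr u v]].

(* Law of Q_{d,p}: each edge retained independently with probability p.
   A configuration is the set w of retained edges, w \subset cube_edges d. *)
Definition eweight (R : realType) d (p : R) (w : {set edge d}) : R :=
  p ^+ #|w| * (1 - p) ^+ (#|cube_edges d| - #|w|).

Definition Prob (R : realType) d (p : R) (A : {set edge d} -> bool) : R :=
  \sum_(w : {set edge d} | (w \subset cube_edges d) && A w) eweight p w.

Definition mu (R : realType) (p : R) (d : nat) : R := (2 - p) ^+ d / 2.
Definition sigma (R : realType) (p : R) (d : nat) : R :=
  Num.sqrt (2^-1 * ((4 - 3 * p) / 2) ^+ d).

Definition inWindow (R : realType) (p : R) (d m : nat) : bool :=
  `|m%:R - mu p d| <= powR (mu p d) (3 / 5).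

Definition Phi {R : realType} d (b : bool) (w : {set edge d}) : R :=
  \sum_(v in side d b) ((2 : R) ^+ Np w v)^-1.

Definition tailPhi (R : realType) (p : R) d (b : bool) (w : {set edge d}) : R :=
  limn (fun N => \sum_(0 <= m < N | ~~ inWindow p d m) Phi b w ^+ m / (m`!)%:R).

(* sum_{m notin Window} sum_{S in Good_m} 2^{-N_p(S)}; Good_m is empty for
   m > 2^d (since |S| = m <= 2^d), so the sum over m is truncated there. *)
Definition tailGood (R : realType) (p : R) d (b : bool) (w : {set edge d}) : R :=
  \sum_(0 <= m < (2 ^ d).+1 | ~~ inWindow p d m)
     \sum_(S : {set vert d} | Good R b m S) ((2 : R) ^+ NpS w S)^-1.

Local Open Scope classical_set_scope.
Local Open Scope ring_scope.
Definition cvg_prob0 (R : realType) (p : R) (X : forall d : nat, {set edge d} -> R) : Prop :=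
  forall eps : R, 0 < eps ->
    (fun d : nat => Prob p (fun w : {set edge d} => eps < `|X d w|)) @ \oo --> (0 : R).

(* Both tails are controlled by a Chernoff-type weight: for t >= 0 the weight
   c_m = e^(t (m - mu - a)) + e^(t (mu - a - m)) is at least 1 whenever
   |m - mu| > a.  Summed against Phi^m / m!, or against the products
   prod_(v in S) 2^(-N_p(v)) over the subsets S of one side (to which
   2^(-N_p(S)) reduces when no two vertices of S are 2-neighbours), it gives at
   most e^(-t (mu + a)) exp(e^t Phi) + e^(t (mu - a)) exp(e^(-t) Phi).  For
   a = mu^(3/5) and t = a / (4 mu) this is at most 2 exp(mu - mu^(1/5)/8 + 2 d)
   as soon as Phi <= mu + d.
   Distinct vertices of one side have disjoint edge stars, so the terms of Phi
   are independent, E Phi = mu and Var Phi <= sigma^2 <= 1/2; by Chebyshev,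
   |Phi - mu| <= d outside an event of probability O(1/d^2).  Since
   sigma >= e^(-(d+1)) while mu^(1/5) grows exponentially in d, on that event
   both normalised tails are eventually below any eps. *)

From HB Require Import structures.
From mathcomp Require Import all_boot all_order all_algebra.
From mathcomp Require Import all_classical all_reals all_analysis.
From mathcomp Require Import ring lra.
Import Order.TTheory GRing.Theory Num.Theory.
Import numFieldNormedType.Exports.
Local Open Scope ring_scope.
Set Implicit Arguments. Unset Strict Implicit. Unset Printing Implicit Defensive.

Section Hypercube.
Variable d : nat.
Implicit Types (u v x : vert d) (i j : 'I_d) (w : {set edge d}) (b : bool).

Lemma flipE u i j : flip u i j = if j == i then ~~ u j else u j.
Proof. by rewrite ffunE. Qed.

Lemma flipK i : involutive (fun u => flip u i).
Proof. by move=> u; apply/ffunP => j; rewrite !flipE; case: eqP => // ->; rewrite negbK. Qed.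

Lemma flip_inj i : injective (fun u => flip u i).
Proof. exact: inv_inj (flipK i). Qed.

Lemma flip_coord_inj u : injective (flip u).
Proof.
by move=> i j /ffunP/(_ i); rewrite !flipE eqxx; case: eqP => // _; case: (u i).
Qed.

Lemma odd_flip u i : odd #|[set j | flip u i j]| = ~~ odd #|[set j | u j]|.
Proof.
case ui: (u i).
- have -> : [set j | flip u i j] = [set j | u j] :\ i.
    by apply/setP => j; rewrite !inE flipE; case: eqP => [->|]; rewrite ?ui.
  by rewrite [in RHS](cardsD1 i) inE ui /= negbK.
- have -> : [set j | flip u i j] = i |: [set j | u j].
    by apply/setP => j; rewrite !inE flipE; case: eqP => [->|]; rewrite ?ui.
  by rewrite cardsU1 inE ui.
Qed.

Lemma side_negb b u : (u \in side d (~~ b)) = (u \notin side d b).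
Proof. by rewrite !inE; case: odd; case: b. Qed.

Lemma side_flip b u i : (flip u i \in side d b) = (u \notin side d b).
Proof. by rewrite -side_negb !inE odd_flip; case: odd; case: b. Qed.

Lemma ekey_cube u i : ekey u i \in cube_edges d.
Proof. by rewrite inE /ekey /=; case ui: (u i); rewrite ?flipE ?eqxx ui. Qed.

Lemma ekey_inj u : injective (ekey u).
Proof. by move=> i j [_]. Qed.

Lemma ekey_eq u v i : ekey u i = ekey v i -> v = u \/ v = flip u i.
Proof.
rewrite /ekey; case: (u i); case: (v i) => -[] E; [left | right | right | left].
- by rewrite (flip_inj E).
- by rewrite E.
- by rewrite E flipK.
- by rewrite E.
Qed.

Definition star u : {set edge d} := [set ekey u i | i : 'I_d].

Lemma card_star u : #|star u| = d.
Proof. by rewrite card_imset ?card_ord //; exact: ekey_inj. Qed.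

Lemma star_cube u : star u \subset cube_edges d.
Proof. by apply/fintype.subsetP => _ /imsetP [i _ ->]; exact: ekey_cube. Qed.

Lemma disjoint_star b u v : u \in side d b -> v \in side d b -> u != v ->
  [disjoint star u & star v].
Proof.
move=> us vs uv; apply/pred0P => e /=; apply/negP => /andP [].
move=> /imsetP [i _ ->] /imsetP [j _ E]; have ji : j = i by case: E.
move: E; rewrite ji => /ekey_eq [vu | vf]; first by rewrite vu eqxx in uv.
by rewrite vf side_flip us in vs.
Qed.

Lemma Np_star w v : Np w v = #|star v :&: w|.
Proof.
rewrite /Np; set I := [set i | ekey v i \in w].
have -> : [set x | adj w v x] = flip v @: I.
  apply/setP => x; rewrite !inE; apply/existsP/imsetP.
  - by move=> [i /andP [/eqP -> vi]]; exists i; rewrite ?inE.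
  - by move=> [i]; rewrite inE => vi ->; exists i; rewrite eqxx.
have -> : star v :&: w = ekey v @: I.
  apply/setP => e; rewrite !inE; apply/andP/imsetP.
  - by move=> [/imsetP [i _ ->] vi]; exists i; rewrite ?inE.
  - by move=> [i]; rewrite inE => vi ->; split => //; apply/imsetP; exists i.
by rewrite !card_imset //; [exact: ekey_inj | exact: flip_coord_inj].
Qed.

Lemma hdist_flip u i : hdist u (flip u i) = 1%N.
Proof.
rewrite /hdist (_ : [set j | u j != flip u i j] = [set i]) ?cards1 //.
apply/setP => j; rewrite !inE flipE; case: (j =P i) => [->|_]; last by rewrite eqxx.
by case: (u i).
Qed.

Lemma adj_hdist w v x : adj w v x -> hdist v x = 1%N.
Proof. by move=> /existsP [i /andP [/eqP -> _]]; exact: hdist_flip. Qed.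

Lemma NpS_sum_Np w (S : {set vert d}) :
  [forall u in S, forall v in S, (u != v) ==> ~~ two_nbr u v] ->
  NpS w S = (\sum_(v in S) Np w v)%N.
Proof.
move=> no2.
have adj_uniq x u v : u \in S -> v \in S -> adj w u x -> adj w v x -> u = v.
  move=> uS vS ux vx; apply/eqP/negPn/negP => uv.
  have nbr : two_nbr u v by apply/existsP; exists x; rewrite (adj_hdist ux) (adj_hdist vx).
  by move/forallP/(_ u): no2; rewrite uS => /forallP/(_ v); rewrite vS uv nbr.
rewrite /NpS /Np; under eq_bigr => v _ do rewrite -sum1_card big_mkcond /=.
rewrite exchange_big /= -sum1_card [in LHS]big_mkcond /=.
apply: eq_bigr => x _; rewrite inE; case: existsP => [[v /andP [vS vx]]|nadj].
- rewrite (bigD1 v) //= inE vx big1 ?addn0 // => u /andP [uS uv].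
  rewrite inE; case: ifP => // ux.
  by rewrite (adj_uniq x u v uS vS ux vx) eqxx in uv.
- rewrite big1 // => v vS; rewrite inE; case: ifP => // vx.
  by case: nadj; exists v; rewrite vS.
Qed.

Lemma card_vert : #|{: vert d}| = (2 ^ d)%N.
Proof. by rewrite card_ffun card_bool card_ord. Qed.

Lemma card_side b : (0 < d)%N -> (#|side d b| * 2 = 2 ^ d)%N.
Proof.
move=> d0; pose i0 : 'I_d := Ordinal d0.
have card_side_negb : #|side d (~~ b)| = #|side d b|.
  rewrite -(card_imset (side d b) (@flip_inj i0)); apply: eq_card => u.
  apply/idP/imsetP => [| [v vs ->]]; last by rewrite side_negb side_flip negbK.
  by rewrite side_negb => us; exists (flip u i0); rewrite ?flipK // side_flip.
rewrite -card_vert -(cardC (side d b)) muln2 -addnn; congr (_ + _)%N.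
by rewrite -card_side_negb; apply: eq_card => u; rewrite side_negb.
Qed.

End Hypercube.

Section Expectation.
Variables (R : realType) (d : nat) (p : R).
Hypotheses (p_ge0 : 0 <= p) (p_le1 : p <= 1).
Implicit Types (w : {set edge d}) (f g : {set edge d} -> R).

Definition Ex f : R := \sum_(w : {set edge d} | w \subset cube_edges d) eweight p w * f w.

Lemma eweight_ge0 w : 0 <= eweight p w.
Proof. by rewrite mulr_ge0 // exprn_ge0 // subr_ge0. Qed.

Lemma eq_Ex f g : f =1 g -> Ex f = Ex g.
Proof. by move=> fg; apply: eq_bigr => w _; rewrite fg. Qed.

Lemma ExD f g : Ex (fun w => f w + g w) = Ex f + Ex g.
Proof. by rewrite -big_split; apply: eq_bigr => w _; rewrite mulrDr. Qed.

Lemma ExZ c f : Ex (fun w => c * f w) = c * Ex f.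
Proof. by rewrite big_distrr; apply: eq_bigr => w _; rewrite mulrCA. Qed.

Lemma Ex_sum (I : finType) (P : pred I) (F : I -> {set edge d} -> R) :
  Ex (fun w => \sum_(i | P i) F i w) = \sum_(i | P i) Ex (F i).
Proof.
rewrite /Ex exchange_big; apply: eq_bigr => w _.
by rewrite big_distrr.
Qed.

(* Non-edges of the cube are never retained, so products may range over all of [edge d]. *)
Let p_in e : R := if e \in cube_edges d then p else 0.
Let p_out e : R := if e \in cube_edges d then 1 - p else 1.

Lemma prod_edge_probs w :
  \prod_e (if e \in w then p_in e else p_out e) =
  if w \subset cube_edges d then eweight p w else 0.
Proof.
case: ifPn => [wC | /fintype.subsetPn [e ew eC]]; last first.
  by rewrite (bigD1 e) //= ew /p_in (negbTE eC) mul0r.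
rewrite (bigID (mem w)) /= (eq_bigr (fun _ => p)) => [|e ew]; last first.
  by rewrite ew /p_in (fintype.subsetP wC).
rewrite [X in _ * X](eq_bigr (fun e => if e \in cube_edges d then 1 - p else 1)); last first.
  by move=> e /negPf ->.
rewrite -big_mkcondr /= !prodr_const /eweight; congr (_ ^+ _ * _ ^+ _).
have -> : (#|cube_edges d| - #|w| = #|cube_edges d :\: w|)%N.
  by rewrite cardsD (finset.setIidPr wC).
by apply: eq_card => e; rewrite unfold_in /= !inE.
Qed.

Lemma Ex_prod (al be : edge d -> R) :
  Ex (fun w => \prod_e (if e \in w then al e else be e)) =
  \prod_e (p_in e * al e + p_out e * be e).
Proof.
rewrite bigA_distr /Ex big_mkcond /=; apply: eq_bigr => w _.
transitivity (\prod_e (if e \in w then p_in e else p_out e) *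
              \prod_e (if e \in w then al e else be e)).
  by rewrite prod_edge_probs; case: ifP; rewrite ?mul0r.
by rewrite -big_split; apply: eq_bigr => e _; case: ifP.
Qed.

Lemma Ex_expr_card_setI (K : {set edge d}) (c : R) : K \subset cube_edges d ->
  Ex (fun w => c ^+ #|K :&: w|) = (p * c + (1 - p)) ^+ #|K|.
Proof.
move=> KC.
rewrite (@eq_Ex _ (fun w => \prod_e (if e \in w then (if e \in K then c else 1) else 1))); last first.
  move=> w; rewrite -prodr_const big_mkcond /=; apply: eq_bigr => e _.
  by rewrite inE; case: (e \in K); case: (e \in w).
rewrite Ex_prod -prodr_const [RHS]big_mkcond /=; apply: eq_bigr => e _.
rewrite mulr1 /p_in /p_out; case eK: (e \in K); first by rewrite (fintype.subsetP KC).
by rewrite mulr1; case: ifP => _; lra.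
Qed.

Lemma Ex1 : Ex (fun _ => 1) = 1.
Proof.
rewrite (@eq_Ex _ (fun w => 1 ^+ #|cube_edges d :&: w|)); last by move=> w; rewrite expr1n.
by rewrite Ex_expr_card_setI // mulr1 addrC subrK expr1n.
Qed.

Lemma Prob_ge0 (A : {set edge d} -> bool) : 0 <= Prob p A.
Proof. by rewrite sumr_ge0 // => w _; exact: eweight_ge0. Qed.

Lemma Prob_le_Ex (A : {set edge d} -> bool) f :
  (forall w, 0 <= f w) -> (forall w, A w -> 1 <= f w) -> Prob p A <= Ex f.
Proof.
move=> f_ge0 Af; rewrite /Prob /Ex big_mkcondr /=; apply: ler_sum => w _.
case: ifP => [/Af f1 | _]; last by rewrite mulr_ge0 ?eweight_ge0.
by rewrite -[X in X <= _]mulr1 ler_wpM2l ?eweight_ge0.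
Qed.

End Expectation.

Section Moments.
Variables (R : realType) (d : nat) (p : R) (b : bool).
Implicit Types (w : {set edge d}) (u v : vert d).

Definition nweight w v : R := ((2 : R) ^+ Np w v)^-1.

Lemma nweightE w v : nweight w v = 2^-1 ^+ #|star v :&: w|.
Proof. by rewrite /nweight Np_star exprVn. Qed.

Lemma nweight_ge0 w v : 0 <= nweight w v.
Proof. by rewrite invr_ge0 exprn_ge0. Qed.

Lemma Ex_expr_nweight (k : nat) v :
  Ex p (fun w => nweight w v ^+ k) = (1 - p + p / 2 ^+ k) ^+ d.
Proof.
rewrite (@eq_Ex _ _ _ _ (fun w => (2^-1 ^+ k) ^+ #|star v :&: w|)); last first.
  by move=> w; rewrite nweightE -!exprM mulnC.
by rewrite Ex_expr_card_setI ?star_cube // card_star exprVn addrC.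
Qed.

Lemma Ex_nweightM u v : u \in side d b -> v \in side d b -> u != v ->
  Ex p (fun w => nweight w u * nweight w v) = (1 - p / 2) ^+ d * (1 - p / 2) ^+ d.
Proof.
move=> us vs uv; have /disjoint_setI0 disj := disjoint_star us vs uv.
have card_starU : #|star u :|: star v| = (d + d)%N.
  by rewrite cardsU disj cards0 subn0 !card_star.
rewrite (@eq_Ex _ _ _ _ (fun w => 2^-1 ^+ #|(star u :|: star v) :&: w|)); last first.
  move=> w; rewrite !nweightE -exprD finset.setIUl cardsU; congr (_ ^+ _).
  by rewrite -finset.setIIl [_ :&: star v]disj finset.set0I cards0 subn0.
rewrite Ex_expr_card_setI ?finset.subUset ?star_cube // card_starU exprD.
by congr (_ ^+ _ * _ ^+ _); lra.
Qed.

Local Notation n := (#|side d b|%:R : R).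

Lemma Ex_Phi : Ex p (fun w => Phi b w) = n * (1 - p / 2) ^+ d.
Proof.
rewrite Ex_sum (eq_bigr (fun _ => (1 - p / 2) ^+ d)) ?sumr_const ?mulr_natl // => v _.
rewrite (@eq_Ex _ _ _ _ (fun w => nweight w v ^+ 1)) ?Ex_expr_nweight //.
by congr (_ ^+ _); lra.
Qed.

Lemma Ex_Phi_sqr :
  Ex p (fun w => Phi b w ^+ 2) <= n * ((1 - 3 * p / 4) ^+ d + n * (1 - p / 2) ^+ d ^+ 2).
Proof.
set q := (1 - p / 2) ^+ d; set q2 := (1 - 3 * p / 4) ^+ d.
have Ex_nweight_sqr v : Ex p (fun w => nweight w v * nweight w v) = q2.
  rewrite (@eq_Ex _ _ _ _ (fun w => nweight w v ^+ 2)) ?Ex_expr_nweight; last first.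
    by move=> w; rewrite expr2.
  by congr (_ ^+ _); lra.
rewrite (@eq_Ex _ _ _ _ (fun w => \sum_(u in side d b) \sum_(v in side d b)
    nweight w u * nweight w v)); last first.
  by move=> w; rewrite expr2 mulr_suml; apply: eq_bigr => u _; rewrite mulr_sumr.
rewrite Ex_sum [X in _ <= X]mulr_natl -sumr_const; apply: ler_sum => u us.
rewrite Ex_sum (bigD1 u) //= Ex_nweight_sqr lerD2l.
rewrite [X in _ <= X]mulr_natl -sumr_const [X in _ <= X](bigD1 u) //= -[X in X <= _]add0r.
apply: lerD; first exact: sqr_ge0.
by apply: ler_sum => v /andP [vs vu]; rewrite Ex_nweightM ?expr2 // eq_sym.
Qed.

Lemma Ex_Phi_var :
  Ex p (fun w => (Phi b w - n * (1 - p / 2) ^+ d) ^+ 2) <= n * (1 - 3 * p / 4) ^+ d.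
Proof.
set m := n * (1 - p / 2) ^+ d.
rewrite (@eq_Ex _ _ _ _ (fun w => Phi b w ^+ 2 + ((- 2 * m) * Phi b w + m ^+ 2 * 1))); last first.
  by move=> w; ring.
rewrite !ExD !ExZ Ex1 Ex_Phi -/m (_ : -2 * m * m + m ^+ 2 * 1 = - m ^+ 2); last by ring.
rewrite lerBlDr (_ : _ + m ^+ 2 = n * ((1 - 3 * p / 4) ^+ d + n * (1 - p / 2) ^+ d ^+ 2)).
  exact: Ex_Phi_sqr.
by rewrite /m; ring.
Qed.

End Moments.

Arguments nweight {R d}.

Section Sums.
Variable R : realType.

Lemma sum_subset_prod (T : finType) (A : {set T}) (y : T -> R) :
  \sum_(S : {set T} | S \subset A) \prod_(v in S) y v = \prod_(v in A) (1 + y v).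
Proof.
rewrite [RHS]big_mkcond /=.
rewrite (eq_bigr (fun v => (if v \in A then y v else 0) + 1)); last first.
  by move=> v _; case: ifP => _; rewrite ?add0r // addrC.
rewrite bigA_distr big_mkcond /=; apply: eq_bigr => S _.
case: ifPn => [SA | /fintype.subsetPn [v vS vA]]; last first.
  by rewrite (bigD1 v) //= vS (negbTE vA) mul0r.
rewrite big_mkcond /=; apply: eq_bigr => v _.
by case: ifP => // vS; rewrite (fintype.subsetP SA).
Qed.

Lemma sum_by_card (T : finType) (N : nat) (P : pred {set T}) (F : {set T} -> R) :
  (#|T| < N)%N ->
  \sum_(0 <= m < N) \sum_(S | P S && (#|S| == m)) F S = \sum_(S | P S) F S.
Proof.
move=> TN; rewrite (exchange_big_dep P) /=; last by move=> m S _ /andP [].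
apply: eq_bigr => S PS; rewrite (eq_bigl (eq_op^~ #|S|)); last first.
  by move=> m; rewrite PS eq_sym.
by rewrite big_nat1_eq leq0n (leq_ltn_trans (max_card _) TN).
Qed.

Lemma exp_series_le (y : R) (N : nat) : 0 <= y ->
  \sum_(0 <= m < N) y ^+ m / (m`!)%:R <= expR y.
Proof.
move=> y0; rewrite (_ : \sum_(0 <= m < N) _ = series (exp_coeff y) N) //.
apply: nondecreasing_cvgn_le; last exact: is_cvg_series_exp_coeff.
apply/nondecreasing_seqP => n; rewrite /series /= big_nat_recr //= lerDl.
by rewrite /exp_coeff /= divr_ge0 // exprn_ge0.
Qed.

Lemma limn_sum_bounds (f : nat -> R) (P : pred nat) (B : R) :
  (forall m, 0 <= f m) -> (forall N, \sum_(0 <= m < N | P m) f m <= B) ->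
  0 <= limn (fun N => \sum_(0 <= m < N | P m) f m) <= B.
Proof.
move=> f_ge0 le_B; set s := fun N => _.
have s_nd : nondecreasing_seq s.
  apply/nondecreasing_seqP => N; rewrite /s big_mkcond [leRHS]big_mkcond /=.
  by rewrite big_nat_recr //= lerDl; case: ifP.
have s_cvg : cvgn s.
  by apply: nondecreasing_is_cvgn => //; exists B => _ [N _ <-]; exact: le_B.
apply/andP; split; last by apply: limr_le => //; exact: nearW.
by rewrite (le_trans _ (nondecreasing_cvgn_le s_nd s_cvg 0)) // /s big_geq.
Qed.

End Sums.

Section ChernoffTail.
Variables (R : realType) (mu a t : R).
Hypothesis t_ge0 : 0 <= t.

Definition chernoff_weight (m : nat) : R :=
  expR (t * (m%:R - (mu + a))) + expR (t * ((mu - a) - m%:R)).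

(* [chernoff_bound F] is the exponential generating function
   [\sum_m chernoff_weight m * F ^+ m / m`!]. *)
Definition chernoff_bound (F : R) : R :=
  expR (- (t * (mu + a))) * expR (expR t * F) +
  expR (t * (mu - a)) * expR (expR (- t) * F).

Lemma chernoff_weight_ge0 m : 0 <= chernoff_weight m.
Proof. by rewrite addr_ge0 // expR_ge0. Qed.

Lemma chernoff_weight_ge1 m : ~~ (`|m%:R - mu| <= a) -> 1 <= chernoff_weight m.
Proof.
rewrite -ltNge ltr_normr => /orP [] far; rewrite /chernoff_weight.
- have := expR_ge1Dx (t * (m%:R - (mu + a))).
  have := expR_ge0 (t * ((mu - a) - m%:R)).
  have : 0 <= t * (m%:R - (mu + a)) by rewrite mulr_ge0 //; lra.
  lra.
- have := expR_ge1Dx (t * ((mu - a) - m%:R)).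
  have := expR_ge0 (t * (m%:R - (mu + a))).
  have : 0 <= t * ((mu - a) - m%:R) by rewrite mulr_ge0 //; lra.
  lra.
Qed.

Lemma chernoff_weightM m x : chernoff_weight m * x =
  expR (- (t * (mu + a))) * (expR t ^+ m * x) +
  expR (t * (mu - a)) * (expR (- t) ^+ m * x).
Proof.
rewrite mulrDl !mulrA -!expRM_natl -!expRD.
by congr (expR _ * _ + expR _ * _); ring.
Qed.

Lemma exp_series_tail_le (F : R) (N : nat) : 0 <= F ->
  \sum_(0 <= m < N | ~~ (`|m%:R - mu| <= a)) F ^+ m / (m`!)%:R <= chernoff_bound F.
Proof.
move=> F_ge0.
apply: (@le_trans _ _ (\sum_(0 <= m < N) chernoff_weight m * (F ^+ m / (m`!)%:R))).
  rewrite big_mkcond /=; apply: ler_sum => m _.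
  have term_ge0 : 0 <= F ^+ m / (m`!)%:R by rewrite divr_ge0 // exprn_ge0.
  case: ifP => far; last by rewrite mulr_ge0 // chernoff_weight_ge0.
  by rewrite -[X in X <= _]mul1r ler_wpM2r // chernoff_weight_ge1.
under eq_bigr => m _ do rewrite chernoff_weightM !(mulrA (expR _ ^+ m)) -!exprMn.
rewrite big_split /= -!big_distrr /= lerD //;
  by rewrite ler_wpM2l ?expR_ge0 // exp_series_le // mulr_ge0 // expR_ge0.
Qed.

Lemma subset_tail_le (T : finType) (A : {set T}) (y : T -> R) :
  (forall v, 0 <= y v) ->
  \sum_(S : {set T} | S \subset A) chernoff_weight #|S| * \prod_(v in S) y v <=
  chernoff_bound (\sum_(v in A) y v).
Proof.
move=> y_ge0.
have prod_le_exp c : 0 <= c -> \prod_(v in A) (1 + c * y v) <= expR (c * \sum_(v in A) y v).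
  move=> c_ge0; rewrite big_distrr expR_sum /=; apply: ler_prod => v _.
  by rewrite expR_ge1Dx addr_ge0 // mulr_ge0.
under eq_bigr => S _ do rewrite chernoff_weightM -!prodr_const -!big_split /=.
rewrite big_split /= -!big_distrr /= !sum_subset_prod.
by rewrite lerD // ler_wpM2l ?expR_ge0 // prod_le_exp // expR_ge0.
Qed.

End ChernoffTail.

Section TailBounds.
Variables (R : realType) (p : R) (d : nat) (b : bool) (w : {set edge d}) (t : R).
Hypothesis t_ge0 : 0 <= t.

Local Notation tail_bound :=
  (chernoff_bound (mu p d) (powR (mu p d) (3 / 5)) t (Phi b w)).

Lemma Phi_ge0 : 0 <= Phi b w :> R.
Proof. by rewrite sumr_ge0 // => v _; exact: nweight_ge0. Qed.

Lemma tailPhi_bounds : 0 <= tailPhi p b w <= tail_bound.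
Proof.
apply: limn_sum_bounds => [m | N]; first by rewrite divr_ge0 ?exprn_ge0 ?Phi_ge0.
exact: (exp_series_tail_le _ _ t_ge0 N Phi_ge0).
Qed.

Lemma Good_NpS_weight m (S : {set vert d}) : Good R b m S ->
  ((2 : R) ^+ NpS w S)^-1 = \prod_(v in S) nweight w v.
Proof. by case/and4P => _ _ _ no2; rewrite NpS_sum_Np // expr_sum -prodfV. Qed.

Lemma tailGood_bounds : 0 <= tailGood p b w <= tail_bound.
Proof.
set N := (2 ^ d).+1; set cw := chernoff_weight (mu p d) (powR (mu p d) (3 / 5)) t.
pose H m : R := \sum_(S : {set vert d} | (S \subset side d b) && (#|S| == m))
  \prod_(v in S) nweight w v.
have prod_ge0 (S : {set vert d}) : 0 <= \prod_(v in S) nweight w v :> R.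
  by rewrite prodr_ge0 // => v _; exact: nweight_ge0.
apply/andP; split; first by rewrite !sumr_ge0 // => m _; rewrite sumr_ge0.
have le_H : tailGood p b w <= \sum_(0 <= m < N | ~~ inWindow p d m) H m.
  apply: ler_sum => m _; rewrite big_mkcond [leRHS]big_mkcond /=.
  apply: ler_sum => S _; case: ifP => [SG | _]; last by case: ifP.
  by move: (SG) => /and4P [-> /eqP -> _ _]; rewrite eqxx (Good_NpS_weight SG).
apply: (le_trans le_H); apply: (@le_trans _ _ (\sum_(0 <= m < N) cw m * H m)).
  rewrite [leLHS]big_mkcond /=; apply: ler_sum => m _.
  case: ifP => far; last by rewrite mulr_ge0 ?sumr_ge0 // chernoff_weight_ge0.
  by rewrite -[leLHS]mul1r ler_wpM2r ?sumr_ge0 // chernoff_weight_ge1.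
rewrite (eq_bigr (fun m => \sum_(S : {set vert d} | (S \subset side d b) && (#|S| == m))
    cw #|S| * \prod_(v in S) nweight w v)); last first.
  by move=> m _; rewrite big_distrr; apply: eq_big => // S /andP [_ /eqP ->].
rewrite sum_by_card ?card_set ?card_vert ?ltn_expl //.
exact: (subset_tail_le _ _ _ _ (nweight_ge0 R w)).
Qed.

End TailBounds.

Section ChernoffEstimate.
Variable R : realType.
Implicit Types (x m a t r F : R).

Lemma expR_le_quadratic x : 0 <= x <= 2^-1 -> expR x <= 1 + x + 2 * x ^+ 2.
Proof.
case/andP => x_ge0 x_le; have x1 : 0 < 1 - x by lra.
rewrite -(ler_pM2r x1); apply: (@le_trans _ _ 1).
  by rewrite -[leRHS](expRxMexpNx_1 x) ler_wpM2l ?expR_ge0 //; exact: expR_ge1Dx.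
have -> : (1 + x + 2 * x ^+ 2) * (1 - x) = 1 + x ^+ 2 * (1 - 2 * x) by ring.
by rewrite lerDl mulr_ge0 ?sqr_ge0 //; lra.
Qed.

Lemma expRN_le_quadratic x : 0 <= x -> expR (- x) <= 1 - x + x ^+ 2.
Proof.
move=> x_ge0; have x1 : 0 < 1 + x by lra.
rewrite -(ler_pM2r x1); apply: (@le_trans _ _ 1).
  by rewrite -[leRHS](expRxMexpNx_1 x) mulrC ler_wpM2r ?expR_ge0 //; exact: expR_ge1Dx.
have -> : (1 - x + x ^+ 2) * (1 + x) = 1 + x ^+ 3 by ring.
by rewrite lerDl exprn_ge0.
Qed.

Lemma chernoff_bound_le m a t r F : 0 <= m -> 0 <= t <= 2^-1 -> 0 <= r ->
  0 <= F <= m + r ->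
  chernoff_bound m a t F <= 2 * expR (m - t * a + 2 * t ^+ 2 * m + 2 * r).
Proof.
move=> m_ge0 t01 r_ge0 /andP [F_ge0 F_le]; have /andP [t_ge0 t_le] := t01.
have t2_le : t ^+ 2 <= 2^-1 * t by rewrite expr2 ler_wpM2r.
have tr_le : t * r <= 2^-1 * r by rewrite ler_wpM2r.
have t2r_le : t ^+ 2 * r <= 2^-1 * (t * r) by rewrite mulrA ler_wpM2r.
have t2m_ge0 : 0 <= t ^+ 2 * m by rewrite mulr_ge0 ?sqr_ge0.
have t2r_ge0 : 0 <= t ^+ 2 * r by rewrite mulr_ge0 ?sqr_ge0.
rewrite /chernoff_bound -!expRD [2 * _]mulr_natl mulr2n.
apply: lerD; rewrite ler_expR.
- have := ler_pM (expR_ge0 t) F_ge0 (expR_le_quadratic t01) F_le.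
  have -> : (1 + t + 2 * t ^+ 2) * (m + r) =
    m + t * m + 2 * (t ^+ 2 * m) + r + t * r + 2 * (t ^+ 2 * r) by ring.
  have -> : - (t * (m + a)) = - (t * m) - t * a by ring.
  lra.
- have := ler_pM (expR_ge0 (- t)) F_ge0 (expRN_le_quadratic t_ge0) F_le.
  have -> : (1 - t + t ^+ 2) * (m + r) =
    m - t * m + t ^+ 2 * m + r - t * r + t ^+ 2 * r by ring.
  have -> : t * (m - a) = t * m - t * a by ring.
  lra.
Qed.

(* For a = m^(3/5), t = a / (4 m) minimises the exponent - t a + 2 t^2 m of
   chernoff_bound_le, whose minimum is - a^2 / (8 m) = - m^(1/5) / 8. *)
Lemma chernoff_window_le m r F : 1 <= m -> 0 <= r -> 0 <= F <= m + r ->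
  chernoff_bound m (powR m (3 / 5)) (powR m (3 / 5) / (4 * m)) F <=
  2 * expR (m - powR m (1 / 5) / 8 + 2 * r).
Proof.
move=> m_ge1 r_ge0 F_bounds; set a := powR m (3 / 5); set t := a / (4 * m).
have m_gt0 : 0 < m by lra.
have a_ge0 : 0 <= a := powR_ge0 _ _.
have a_le : a <= m by apply: ler1_powR => //; lra.
have t01 : 0 <= t <= 2^-1.
  rewrite divr_ge0 ?mulr_ge0 //= ?ler_pdivrMr ?mulr_gt0 //; lra.
have a2 : a ^+ 2 = m * powR m (1 / 5).
  rewrite -powR_mulrn // -powRrM (_ : 3 / 5 * 2%:R = 1 + 1 / 5); last by lra.
  by rewrite powRD ?powRr1 ?gt_eqF ?implybT //; lra.
apply: (le_trans (chernoff_bound_le a (ltW m_gt0) t01 r_ge0 F_bounds)).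
rewrite ler_pM2l // ler_expR.
have : t * a - 2 * t ^+ 2 * m = powR m (1 / 5) / 8.
  transitivity (a ^+ 2 / (8 * m)); first by rewrite /t; field; lra.
  by rewrite a2; field; lra.
lra.
Qed.

End ChernoffEstimate.

Section MuSigma.
Variables (R : realType) (p : R).

Lemma mu_gt0 d : p < 2 -> 0 < mu p d.
Proof. by move=> p_lt2; rewrite divr_gt0 // exprn_gt0 //; lra. Qed.

Lemma ln_mu d : p < 2 -> ln (mu p d) = d%:R * ln (2 - p) - ln 2.
Proof.
move=> p_lt2; have p2 : 0 < 2 - p by lra.
by rewrite lnM ?posrE ?exprn_gt0 ?invr_gt0 // lnXn // lnV ?posrE // mulr_natl.
Qed.

Lemma sigma_sqr d : p <= 4 / 3 -> sigma p d ^+ 2 = 2^-1 * ((4 - 3 * p) / 2) ^+ d.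
Proof. by move=> p_le; rewrite sqr_sqrtr // mulr_ge0 ?exprn_ge0 //; lra. Qed.

Lemma sigma_ge d : 0 <= p <= 1 -> expR (- (d%:R + 1)) <= sigma p d.
Proof.
case/andP => p_ge0 p_le1; set s := expR (- (d%:R + 1)).
have s_le1 : s <= 1 by rewrite expR_le1; have := ler0n R d; lra.
have e_inv : expR (-1) <= 2^-1 :> R.
  by rewrite expRN lef_pV2 ?posrE ?expR_gt0 //; have := expR_ge1Dx (1 : R); lra.
have s_le : s <= 2^-1 ^+ d.+1.
  rewrite /s natr1 -mulrN1 expRM_natl.
  by apply: lerXn2r; rewrite ?nnegrE ?expR_ge0 //; lra.
rewrite -(@ler_pXn2r _ 2) ?nnegrE ?expR_ge0 ?sqrtr_ge0 // sigma_sqr; last lra.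
apply: (le_trans (_ : s ^+ 2 <= s)); first by rewrite expr2 ler_piMr ?expR_ge0.
apply: (le_trans s_le); rewrite exprS; apply: ler_wpM2l; first lra.
by apply: lerXn2r; rewrite ?nnegrE //; lra.
Qed.

Lemma sigma_gt0 d : 0 <= p <= 1 -> 0 < sigma p d.
Proof. by move=> p01; exact: lt_le_trans (expR_gt0 _) (sigma_ge d p01). Qed.

(* This is the only place where the hypothesis p >= 2/3 enters. *)
Lemma sigma_sqr_le_half d : 2 / 3 <= p <= 4 / 3 -> sigma p d ^+ 2 <= 2^-1.
Proof.
case/andP => p_ge p_le; rewrite sigma_sqr; last lra.
rewrite -[leRHS]mulr1; apply: ler_wpM2l; first lra.
by apply: exprn_ile1; lra.
Qed.

Lemma card_side_mu b d : (0 < d)%N -> #|side d b|%:R * (1 - p / 2) ^+ d = mu p d.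
Proof.
move=> d_gt0; rewrite /mu (_ : 2 - p = 2 * (1 - p / 2)); last by lra.
by rewrite exprMn -natrX -(card_side b d_gt0) natrM; field.
Qed.

Lemma card_side_sigma2 b d : (0 < d)%N -> p <= 4 / 3 ->
  #|side d b|%:R * (1 - 3 * p / 4) ^+ d = sigma p d ^+ 2.
Proof.
move=> d_gt0 p_le; rewrite sigma_sqr // (_ : (4 - 3 * p) / 2 = 2 * (1 - 3 * p / 4)); last by lra.
by rewrite exprMn -natrX -(card_side b d_gt0) natrM; field.
Qed.

Lemma Phi_chebyshev b d (A : {set edge d} -> bool) (r : R) : 0 <= p <= 1 ->
  (0 < d)%N -> 0 < r -> (forall w, A w -> r <= `|Phi b w - mu p d|) ->
  Prob p A <= sigma p d ^+ 2 / r ^+ 2.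
Proof.
case/andP => p_ge0 p_le1 d_gt0 r_gt0 A_far; have r2_gt0 : 0 < r ^+ 2 by rewrite exprn_gt0.
apply: (le_trans (Prob_le_Ex p_ge0 p_le1 (f := fun w => (r ^+ 2)^-1 * (Phi b w - mu p d) ^+ 2) _ _)).
- by move=> w; rewrite mulr_ge0 ?invr_ge0 ?sqr_ge0 ?ltW.
- move=> w /A_far far; rewrite ler_pdivlMl // mulr1.
  rewrite -[leRHS]real_normK ?num_real //.
  by apply: lerXn2r; rewrite // ?nnegrE ?normr_ge0 ?(ltW r_gt0).
have -> : Ex p (fun w : {set edge d} => (r ^+ 2)^-1 * (Phi b w - mu p d) ^+ 2) =
    (r ^+ 2)^-1 * Ex p (fun w : {set edge d} => (Phi b w - mu p d) ^+ 2) by exact: ExZ.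
rewrite -(card_side_mu b d_gt0) mulrC; apply: ler_wpM2r; first by rewrite invr_ge0 ltW.
by rewrite -(card_side_sigma2 b d_gt0) ?Ex_Phi_var //; lra.
Qed.

End MuSigma.

Local Open Scope classical_set_scope.
Local Open Scope ring_scope.

Section Growth.
Variables (R : realType) (p : R).

Lemma powR_mu_ge d : p < 2 -> 2 * ln 2 <= d%:R * ln (2 - p) ->
  (d%:R * ln (2 - p)) ^+ 2 / 200 <= powR (mu p d) (1 / 5).
Proof.
move=> p_lt2; set x := d%:R * ln (2 - p) => x_ge.
have ln2_ge0 : 0 <= ln (2 : R) by apply: ln_ge0; lra.
set l := ln (mu p d); have l_ge : x / 2 <= l by rewrite /l ln_mu // -/x; lra.
have l2 : (x / 2) ^+ 2 <= l ^+ 2 by apply: lerXn2r; rewrite ?nnegrE //; lra.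
rewrite /powR gt_eqF ?mu_gt0 // -/l.
apply: (le_trans _ (expR_ge1Dxn 1 (_ : 0 <= 1 / 5 * l))); last lra.
have -> : (1.+1)`!%:R = 2 :> R by [].
have -> : (1 / 5 * l) ^+ 2 = l ^+ 2 / 25 by field.
rewrite (_ : (x / 2) ^+ 2 = x ^+ 2 / 4) in l2; last by field.
lra.
Qed.

Lemma powR_mu_superlinear (K L : R) : p < 1 ->
  \forall d \near \oo, K + L * d%:R <= powR (mu p d) (1 / 5).
Proof.
move=> p_lt1; set c := ln (2 - p); have c_gt0 : 0 < c by apply: ln_gt0; lra.
have c2_gt0 : 0 < c ^+ 2 by rewrite exprn_gt0.
near=> d.
have d_ge1 : 1 <= d%:R :> R by near: d; exact: nbhs_infty_ger.
have d_ln2 : 2 * ln 2 <= d%:R * c.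
  by rewrite -ler_pdivrMr //; near: d; exact: nbhs_infty_ger.
have d_KL : `|K| + `|L| <= d%:R * c ^+ 2 / 200.
  by rewrite ler_pdivlMr // -ler_pdivrMr //; near: d; exact: nbhs_infty_ger.
apply: (le_trans _ (powR_mu_ge _ d_ln2)); last lra.
apply: (@le_trans _ _ ((`|K| + `|L|) * d%:R)).
  rewrite mulrDl lerD //; last by rewrite ler_wpM2r ?ler_norm.
  by rewrite (le_trans (ler_norm K)) // ler_peMr.
rewrite (_ : (d%:R * c) ^+ 2 / 200 = d%:R * c ^+ 2 / 200 * d%:R); last by ring.
by rewrite ler_wpM2r.
Unshelve. all: end_near.
Qed.

Lemma mu_ge1 : p < 1 -> \forall d \near \oo, 1 <= mu p d.
Proof.
move=> p_lt1; have c_gt0 : 0 < ln (2 - p) by apply: ln_gt0; lra.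
near=> d; rewrite -[mu p d]lnK ?posrE ?mu_gt0 //; last lra.
rewrite -expR0 ler_expR ln_mu; last lra.
rewrite subr_ge0 -ler_pdivrMr //; near: d; exact: nbhs_infty_ger.
Unshelve. all: end_near.
Qed.

End Growth.

Section Main.
Variables (R : realType) (p : R) (b : bool).

Local Notation window_bound d F :=
  (chernoff_bound (mu p d) (powR (mu p d) (3 / 5)) (powR (mu p d) (3 / 5) / (4 * mu p d)) F).

Lemma window_bound_small (eps : R) : 0 <= p -> p < 1 -> 0 < eps ->
  \forall d \near \oo, forall F, 0 <= F -> `|F - mu p d| <= d%:R ->
    window_bound d F / (sigma p d * expR (mu p d)) <= eps.
Proof.
move=> p_ge0 p_lt1 eps_gt0; have p01 : 0 <= p <= 1 by rewrite p_ge0 ltW.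
near=> d => F F_ge0 F_near.
have mu1 : 1 <= mu p d by near: d; exact: mu_ge1.
have growth : 8 * (1 - ln (eps / 2)) + 24 * d%:R <= powR (mu p d) (1 / 5).
  by near: d; exact: powR_mu_superlinear.
have F_le : 0 <= F <= mu p d + d%:R.
  by rewrite F_ge0 -lerBlDl (le_trans (ler_norm _) F_near).
rewrite ler_pdivrMr ?mulr_gt0 ?expR_gt0 ?sigma_gt0 //.
apply: (le_trans (chernoff_window_le mu1 (ler0n _ d) F_le)).
apply: (le_trans _ (ler_wpM2l (ltW eps_gt0) (ler_wpM2r (expR_ge0 _) (sigma_ge d p01)))).
have -> : eps = 2 * expR (ln (eps / 2)) by rewrite lnK ?posrE ?divr_gt0 //; field.
rewrite -mulrA -!expRD ler_pM2l // ler_expR; lra.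
Unshelve. all: end_near.
Qed.

Lemma cvg_prob0_window_bound (X : forall d, {set edge d} -> R) :
  2 / 3 <= p -> p < 1 -> (forall d w, 0 <= X d w <= window_bound d (Phi b w)) ->
  cvg_prob0 p (fun d w => X d w / (sigma p d * expR (mu p d))).
Proof.
move=> p_ge p_lt1 X_bounds eps eps_gt0.
have p_ge0 : 0 <= p by lra.
apply: (@squeeze_cvgr _ _ _ _ (fun _ => 0) (fun d => harmonic d)); last first.
- exact: cvg_harmonic.
- exact: cvg_cst.
near=> d; rewrite (Prob_ge0 p_ge0 (ltW p_lt1)) /=.
have d_gt0 : (0 < d)%N by near: d; exact: nbhs_infty_gt.
have small : forall F, 0 <= F -> `|F - mu p d| <= d%:R ->
    window_bound d F / (sigma p d * expR (mu p d)) <= eps.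
  by near: d; exact: window_bound_small.
have d_ge1 : (1 : R) <= d%:R by rewrite ler1n.
have d_gt0R : (0 : R) < d%:R by rewrite ltr0n.
have p01 : 0 <= p <= 1 by rewrite p_ge0 ltW.
apply: (le_trans (Phi_chebyshev (b := b) (r := d%:R) p01 d_gt0 d_gt0R _)).
  move=> w eps_lt; rewrite leNgt; apply/negP => near_mean.
  have /andP [X_ge0 X_le] := X_bounds d w.
  have denom_gt0 : 0 < sigma p d * expR (mu p d) by rewrite mulr_gt0 ?expR_gt0 ?sigma_gt0.
  suff : `|X d w / (sigma p d * expR (mu p d))| <= eps by rewrite leNgt eps_lt.
  rewrite ger0_norm; last by rewrite divr_ge0 // ltW.
  apply: (le_trans _ (small _ (Phi_ge0 R b w) (ltW near_mean))).
  by rewrite ler_pM2r ?invr_gt0.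
have sigma2_le : sigma p d ^+ 2 <= 2^-1 by apply: sigma_sqr_le_half; rewrite p_ge /=; lra.
apply: (le_trans (ler_wpM2r _ sigma2_le)); first by rewrite invr_ge0 exprn_ge0.
rewrite -invfM lef_pV2 ?posrE ?mulr_gt0 ?exprn_gt0 //; try lra.
by rewrite -natr1; nra.
Unshelve. all: end_near.
Qed.

End Main.

Unset Implicit Arguments.

Theorem lemma5p2 (R : realType) (p : R) :
  2 / 3 <= p -> p < 1 ->
  forall b : bool,
    cvg_prob0 p (fun d w => tailPhi p b w / (sigma p d * expR (mu p d))) /\
    cvg_prob0 p (fun d w => tailGood p b w / (sigma p d * expR (mu p d))).
Proof.
move=> p_ge p_lt1 b.
have t_ge0 d : 0 <= powR (mu p d) (3 / 5) / (4 * mu p d).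
  by rewrite divr_ge0 ?powR_ge0 // mulr_ge0 // ltW // mu_gt0 //; lra.
split; apply: cvg_prob0_window_bound => // d w.
- exact: tailPhi_bounds (t_ge0 d).
- exact: tailGood_bounds (t_ge0 d).
Qed.
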